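(* Let $d>0$ and $y_1>0$, and let $S$ be a finite set of points in $\{(x,y):x\ge d\}$ with at least one point on the line $\mathcal{L}'=\{x=d\}$. Define $x^*<0$ as follows: if $S$ has no point $(d,y)$ with $y>y_1$, let $x^*$ be an arbitrary negative number; otherwise let $y_3=\max\{y:(d,y)\in S,\ y>y_1\}$ and $x^*=-\frac{1}{2}\,d\,\frac{y_1}{y_3-y_1}$. Then for every $x\in[x^*,0)$, every $y_1'\ge y_1$ and every $q\in S\cap\mathcal{L}'$: the closed segment from $q$ to $(x,0)$ contains no point of $(S\setminus\{q\})\cup\{(0,y_1')\}$, and the closed segment from $q$ to $(0,y_1')$ contains no point of $(S\setminus\{q\})\cup\{(x,0)\}$. (Interpretation: a robot starting at the origin and moving left horizontally to $(x^*,0)$, while another robot at $(0,y_1)$ stays put or moves upward along the $Y$-axis, never obstructs or is obstructed from the robots on the leftmost line $\mathcal{L}'$ of the remaining robots $S$.)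
   Context: All coordinates are in a fixed Cartesian coordinate system of the plane; ''segment'' means closed line segment. *)

From Stdlib Require Import Reals List.
Import ListNotations.
Open Scope R_scope.

Definition point := (R * R)%type.

Definition on_segment (a b p : point) : Prop :=
  exists t : R, 0 <= t <= 1 /\
    fst p = fst a + t * (fst b - fst a) /\
    snd p = snd a + t * (snd b - snd a).

From Stdlib Require Import Reals List Lra Psatz.
Import ListNotations.
Open Scope R_scope.

(* Let q = (d, qy) be a point of S on the line x = d.
   - Every segment leaving q towards a point strictly left of x = d meets the
     half-plane {x >= d} only at q itself; since S lies in that half-plane, no
     other point of S lies on the segment from q to (x,0) or to (0,y1').
   - A segment between two points of {x >= 0} stays in {x >= 0}, so it cannot
     contain (x,0) with x < 0.
   - The segment from q to (x,0) crosses the Y-axis at the height h with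
     h (d - x) = qy (-x).  This height is below y1 <= y1': when qy <= y1 this
     is immediate; when qy > y1 then qy <= y3 and the choice of x* bounds
     (-x)(qy - y1) by d y1 / 2.  Hence (0,y1') is not on that segment. *)

Lemma on_segment_fst_lower_bound (a b p : point) (c : R) :
  c <= fst a -> c <= fst b -> on_segment a b p -> c <= fst p.
Proof.
  intros Ha Hb [t [Ht [Ex _]]].
  rewrite Ex. nra.
Qed.

Lemma on_segment_leftward_only_start (a b p : point) :
  fst b < fst a -> fst a <= fst p -> on_segment a b p -> p = a.
Proof.
  destruct a as [ax ay], b as [bx by_], p as [px py]; simpl.
  intros Hba Hap [t [Ht [Ex Ey]]]; simpl in Ex, Ey.
  assert (Ht0 : t = 0) by nra.
  subst t. f_equal; lra.
Qed.

Lemma on_segment_axis_crossing (d qy x h : R) :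
  0 < d -> x < 0 -> on_segment (d, qy) (x, 0) (0, h) -> h * (d - x) = qy * (- x).
Proof.
  intros Hd Hx [t [Ht [Ex Ey]]]; simpl in Ex, Ey.
  assert (Hcross : (1 - t) * (d - x) = - x) by nra.
  rewrite Ey, <- Hcross. ring.
Qed.

Lemma crossing_below_low_start (d x qy y1 y1' : R) :
  0 < d -> x < 0 -> 0 < y1 -> qy <= y1 -> y1 <= y1' ->
  qy * (- x) < y1' * (d - x).
Proof. intros. nra. Qed.

Lemma crossing_below_high_start (d x qy y1 y1' y3 : R) :
  0 < d -> 0 < y1 -> y1 < qy -> qy <= y3 -> y1 <= y1' ->
  - (1/2) * d * (y1 / (y3 - y1)) <= x -> x < 0 ->
  qy * (- x) < y1' * (d - x).
Proof.
  intros Hd Hy1 Hq Hq3 Hy1' Hxs Hx.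
  assert (Hbound : (- x) * (y3 - y1) <= d * y1 / 2).
  { apply Rmult_le_compat_r with (r := y3 - y1) in Hxs; [| lra].
    replace (- (1/2) * d * (y1 / (y3 - y1)) * (y3 - y1)) with (- (d * y1 / 2))
      in Hxs by (field; lra).
    lra. }
  assert (Hmono : (- x) * (qy - y1) <= (- x) * (y3 - y1)) by nra.
  nra.
Qed.

Theorem mainTheorem6 (d y1 xstar : R) (S : list point)
  (Hd : 0 < d) (Hy1 : 0 < y1)
  (HS : forall p, In p S -> d <= fst p)
  (HL : exists q, In q S /\ fst q = d)
  (Hxneg : xstar < 0)
  (Hxdef : (exists y, In (d, y) S /\ y1 < y) ->
     exists y3, In (d, y3) S /\ y1 < y3 /\
       (forall y, In (d, y) S -> y1 < y -> y <= y3) /\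
       xstar = - (1/2) * d * (y1 / (y3 - y1))) :
  forall x, xstar <= x < 0 ->
  forall y1', y1 <= y1' ->
  forall q, In q S -> fst q = d ->
    (forall p, (In p S /\ p <> q) \/ p = (0, y1') -> ~ on_segment q (x, 0) p) /\
    (forall p, (In p S /\ p <> q) \/ p = (x, 0) -> ~ on_segment q (0, y1') p).
Proof.
  intros x [Hxs Hx] y1' Hy1' [qx qy] Hq Hqx; simpl in Hqx; subst qx.
  assert (Hlow : qy * (- x) < y1' * (d - x)).
  { destruct (Rle_dec qy y1) as [Hle | Hgt].
    - now apply (crossing_below_low_start d x qy y1 y1').
    - destruct Hxdef as [y3 [Hy3S [Hy3 [Hmax ->]]]]; [exists qy; split; auto; lra |].
      apply (crossing_below_high_start d x qy y1 y1' y3); auto; try lra.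
      apply Hmax; auto; lra. }
  split; intros p [[HpS Hne] | ->] Hon.
  - apply Hne, (on_segment_leftward_only_start _ (x, 0)); simpl; auto; lra.
  - apply on_segment_axis_crossing in Hon; lra.
  - apply Hne, (on_segment_leftward_only_start _ (0, y1')); simpl; auto; lra.
  - apply (on_segment_fst_lower_bound _ _ _ 0) in Hon; simpl in *; lra.
Qed.
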